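(* Let $(\mathcal{C},\mathsf{I},\otimes,\lambda,\rho,\alpha)$ be a left-skew monoidal category, let $(T,\eta,\mu)$ be a monoid in it, and let $(\mathcal{E},\mathcal{M})$ be an orthogonal factorization system on $\mathcal{C}$ such that $\mathcal{E}$ is closed under $(-)\otimes S$ for every object $(S,s)$ of $\mathcal{M}/T$ (i.e. $e\otimes S\in\mathcal{E}$ whenever $e\in\mathcal{E}$). Then $(\mathcal{M}/T, \mathsf{J}, \boxdot, \ell, r, a)$, as defined in the context, is a left-skew monoidal category. If $\lambda$ is a natural isomorphism (the skew monoidal category $\mathcal{C}$ is left-normal), then so is $\ell$. If moreover $\mathcal{E}$ is also closed under $S\otimes(-)$ for every object $(S,s)$ of $\mathcal{M}/T$ and $(\mathcal{C},\mathsf{I},\otimes,\lambda,\rho,\alpha)$ is monoidal (i.e. $\lambda,\rho,\alpha$ are all isomorphisms), then $(\mathcal{M}/T,\mathsf{J},\boxdot,\ell,r,a)$ is monoidal.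
   Context: A left-skew monoidal category consists of a category $\mathcal{C}$, an object $\mathsf{I}$, a functor $\otimes:\mathcal{C}\times\mathcal{C}\to\mathcal{C}$ and natural transformations (not necessarily invertible) $\lambda_X:\mathsf{I}\otimes X\to X$, $\rho_X : X\to X\otimes \mathsf{I}$, $\alpha_{X,Y,Z}:(X\otimes Y)\otimes Z\to X\otimes(Y\otimes Z)$ satisfying: $\lambda_{\mathsf{I}}\circ\rho_{\mathsf{I}} = \mathrm{id}$; $(X\otimes\lambda_Y)\circ\alpha_{X,\mathsf{I},Y}\circ(\rho_X\otimes Y) = \mathrm{id}$; $\lambda_{X\otimes Y}\circ\alpha_{\mathsf{I},X,Y} = \lambda_X\otimes Y$; $\alpha_{X,Y,\mathsf{I}}\circ\rho_{X\otimes Y} = X\otimes\rho_Y$; $(X\otimes\alpha_{Y,Z,W})\circ\alpha_{X,Y\otimes Z,W}\circ(\alpha_{X,Y,Z}\otimes W) = \alpha_{X,Y,Z\otimes W}\circ\alpha_{X\otimes Y,Z,W}$. It is monoidal if $\lambda,\rho,\alpha$ are all isomorphisms. A monoid is $(T,\eta:\mathsf{I}\to T,\mu:T\otimes T\to T)$ with $\mu\circ(\eta\otimes T) = \lambda_T$, $\mu\circ(T\otimes\eta)\circ\rho_T = \mathrm{id}_T$, $\mu\circ(\mu\otimes T) = \mu\circ(T\otimes\mu)\circ\alpha_{T,T,T}$. An orthogonal factorization system $(\mathcal{E},\mathcal{M})$ on $\mathcal{C}$: both classes contain all isomorphisms and are closed under composition; for every commuting square $g\circ e = m\circ f$ with $e\in\mathcal{E}$,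 $m\in\mathcal{M}$ there is a unique $d$ with $d\circ e = f$ and $m\circ d = g$; every morphism factors as $m\circ e$ with $e\in\mathcal{E}$, $m\in\mathcal{M}$. $\mathcal{M}/T$ is the category with objects $(S,s)$, $s:S\to T$ in $\mathcal{M}$, and morphisms $f:(S,s)\to(S',s')$ the $f:S\to S'$ with $s'\circ f = s$. Structure on $\mathcal{M}/T$: factor $\eta = j\circ q$ with $q:\mathsf{I}\to\mathsf{J}$ in $\mathcal{E}$, $j:\mathsf{J}\to T$ in $\mathcal{M}$; the unit is $(\mathsf{J},j)$. For objects $(S,s),(S',s')$ factor $\mu\circ(s\otimes s') = (s\boxdot s')\circ q_{S,S'}$ with $q_{S,S'}:S\otimes S'\to S\boxdot S'$ in $\mathcal{E}$, $s\boxdot s'$ in $\mathcal{M}$; the tensor is $(S\boxdot S', s\boxdot s')$. For morphisms $f:(S_1,s_1)\to(S_2,s_2)$, $f':(S'_1,s'_1)\to(S'_2,s'_2)$, $f\boxdot f'$ is the unique morphism with $(f\boxdot f')\circ q_{S_1,S'_1} = q_{S_2,S'_2}\circ(f\otimes f')$ and $(s_2\boxdot s'_2)\circ(f\boxdot f') = s_1\boxdot s'_1$. The left unitor $\ell_S : \mathsf{J}\boxdot S\to S$ is the unique morphism with $\ell_S\circ q_{\mathsf{J},S}\circ(q\otimes S) = \lambda_S$ and $s\circ\ell_S = j\boxdot s$. The right unitor is $r_S = q_{S,\mathsf{J}}\circ(S\otimes q)\circ\rho_S : S\to S\boxdot\mathsf{J}$. The associator $a_{S,S',S''} : (S\boxdot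 S')\boxdot S''\to S\boxdot(S'\boxdot S'')$ is the unique morphism with $a\circ q_{S\boxdot S',S''}\circ(q_{S,S'}\otimes S'') = q_{S,S'\boxdot S''}\circ(S\otimes q_{S',S''})\circ\alpha_{S,S',S''}$ and $(s\boxdot(s'\boxdot s''))\circ a = (s\boxdot s')\boxdot s''$. (These diagonals exist and are unique by orthogonality, using closure of $\mathcal{E}$ under $(-)\otimes S$.) *)

From Stdlib Require Import ProofIrrelevance.

Record Cat := mkCat {
  Ob : Type;
  Hom : Ob -> Ob -> Type;
  comp : forall X Y Z : Ob, Hom Y Z -> Hom X Y -> Hom X Z;
  idm : forall X : Ob, Hom X X;
  comp_idl : forall X Y (f : Hom X Y), comp X Y Y (idm Y) f = f;
  comp_idr : forall X Y (f : Hom X Y), comp X X Y f (idm X) = f;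
  comp_assoc : forall X Y Z W (f : Hom Z W) (g : Hom Y Z) (h : Hom X Y),
      comp X Z W f (comp X Y Z g h) = comp X Y W (comp Y Z W f g) h }.
Arguments Hom {c} _ _.
Arguments comp {c X Y Z} _ _.
Arguments idm {c} X.

Definition is_iso {C : Cat} {X Y : Ob C} (f : Hom X Y) : Prop :=
  exists g : Hom Y X, comp g f = idm X /\ comp f g = idm Y.

Section Skew.
Variables (C : Cat) (I : Ob C) (tens : Ob C -> Ob C -> Ob C)
  (tensm : forall A A' B B' : Ob C, Hom A A' -> Hom B B' -> Hom (tens A B) (tens A' B'))
  (lam : forall X : Ob C, Hom (tens I X) X)
  (rho : forall X : Ob C, Hom X (tens X I))
  (alpha : forall X Y Z : Ob C, Hom (tens (tens X Y) Z) (tens X (tens Y Z))).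

Local Notation "f (x) g" := (tensm _ _ _ _ f g) (at level 40, left associativity).

Record skew_monoidal : Prop := {
  tens_id : forall A B : Ob C, idm A (x) idm B = idm (tens A B);
  tens_comp : forall (A1 A2 A3 B1 B2 B3 : Ob C) (f1 : Hom A1 A2) (f2 : Hom A2 A3)
      (g1 : Hom B1 B2) (g2 : Hom B2 B3),
      comp f2 f1 (x) comp g2 g1 = comp (f2 (x) g2) (f1 (x) g1);
  lam_nat : forall (X Y : Ob C) (f : Hom X Y),
      comp f (lam X) = comp (lam Y) (idm I (x) f);
  rho_nat : forall (X Y : Ob C) (f : Hom X Y),
      comp (rho Y) f = comp (f (x) idm I) (rho X);
  alpha_nat : forall (X X' Y Y' Z Z' : Ob C) (f : Hom X X') (g : Hom Y Y') (h : Hom Z Z'),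
      comp (alpha X' Y' Z') ((f (x) g) (x) h) = comp (f (x) (g (x) h)) (alpha X Y Z);
  skew_ax1 : comp (lam I) (rho I) = idm I;
  skew_ax2 : forall X Y : Ob C,
      comp (idm X (x) lam Y) (comp (alpha X I Y) (rho X (x) idm Y)) = idm (tens X Y);
  skew_ax3 : forall X Y : Ob C,
      comp (lam (tens X Y)) (alpha I X Y) = lam X (x) idm Y;
  skew_ax4 : forall X Y : Ob C,
      comp (alpha X Y I) (rho (tens X Y)) = idm X (x) rho Y;
  skew_ax5 : forall X Y Z W : Ob C,
      comp (idm X (x) alpha Y Z W) (comp (alpha X (tens Y Z) W) (alpha X Y Z (x) idm W))
      = comp (alpha X Y (tens Z W)) (alpha (tens X Y) Z W) }.

Definition monoidal : Prop :=
  skew_monoidal /\ (forall X, is_iso (lam X)) /\ (forall X, is_iso (rho X)) /\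
  (forall X Y Z, is_iso (alpha X Y Z)).

Definition is_monoid (T : Ob C) (eta : Hom I T) (mu : Hom (tens T T) T) : Prop :=
  comp mu (eta (x) idm T) = lam T /\
  comp mu (comp (idm T (x) eta) (rho T)) = idm T /\
  comp mu (mu (x) idm T) = comp mu (comp (idm T (x) mu) (alpha T T T)).

End Skew.

Definition is_ofs (C : Cat) (E M : forall X Y : Ob C, Hom X Y -> Prop) : Prop :=
  (forall X Y (f : Hom X Y), is_iso f -> E X Y f) /\
  (forall X Y (f : Hom X Y), is_iso f -> M X Y f) /\
  (forall X Y Z (f : Hom X Y) (g : Hom Y Z), E X Y f -> E Y Z g -> E X Z (comp g f)) /\
  (forall X Y Z (f : Hom X Y) (g : Hom Y Z), M X Y f -> M Y Z g -> M X Z (comp g f)) /\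
  (forall A B X Y (e : Hom A B) (m : Hom X Y) (f : Hom A X) (g : Hom B Y),
      E A B e -> M X Y m -> comp g e = comp m f ->
      exists! d : Hom B X, comp d e = f /\ comp m d = g) /\
  (forall X Y (f : Hom X Y), exists (Z : Ob C) (e : Hom X Z) (m : Hom Z Y),
      E X Z e /\ M Z Y m /\ comp m e = f).

Lemma sig_eq_proj1 (A : Type) (P : A -> Prop) (x y : sig P) :
  proj1_sig x = proj1_sig y -> x = y.
Proof.
  destruct x as [x px], y as [y py]; simpl; intros ->.
  f_equal; apply proof_irrelevance.
Qed.

Section Slice.
Variables (C : Cat) (M : forall X Y : Ob C, Hom X Y -> Prop) (T : Ob C).

Definition sliceOb : Type := { S : Ob C & { s : Hom S T | M S T s } }.
Definition sob (A : sliceOb) : Ob C := projT1 A.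
Definition sarr (A : sliceOb) : Hom (sob A) T := proj1_sig (projT2 A).

Definition sHom (A B : sliceOb) : Type :=
  { f : Hom (sob A) (sob B) | comp (sarr B) f = sarr A }.

Lemma scomp_ok (A B D : sliceOb) (g : sHom B D) (f : sHom A B) :
  comp (sarr D) (comp (proj1_sig g) (proj1_sig f)) = sarr A.
Proof.
  destruct g as [g Hg], f as [f Hf]; simpl.
  rewrite comp_assoc, Hg, Hf; reflexivity.
Qed.

Definition scomp (A B D : sliceOb) (g : sHom B D) (f : sHom A B) : sHom A D :=
  exist _ (comp (proj1_sig g) (proj1_sig f)) (scomp_ok A B D g f).

Definition sid (A : sliceOb) : sHom A A :=
  exist _ (idm (sob A)) (comp_idr C _ _ (sarr A)).

Lemma scomp_idl A B (f : sHom A B) : scomp A B B (sid B) f = f.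
Proof. apply sig_eq_proj1; simpl; apply comp_idl. Qed.
Lemma scomp_idr A B (f : sHom A B) : scomp A A B f (sid A) = f.
Proof. apply sig_eq_proj1; simpl; apply comp_idr. Qed.
Lemma scomp_assoc A B D F (f : sHom D F) (g : sHom B D) (h : sHom A B) :
  scomp A D F f (scomp A B D g h) = scomp A B F (scomp B D F f g) h.
Proof. apply sig_eq_proj1; simpl; apply comp_assoc. Qed.

Definition Slice : Cat := mkCat sliceOb sHom scomp sid scomp_idl scomp_idr scomp_assoc.

End Slice.
Arguments sob {C M T} A.
Arguments sarr {C M T} A.
Arguments sHom {C M T} A B.

Section SliceStructure.
Variables (C : Cat) (I : Ob C) (tens : Ob C -> Ob C -> Ob C)
  (tensm : forall A A' B B' : Ob C, Hom A A' -> Hom B B' -> Hom (tens A B) (tens A' B'))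
  (lam : forall X : Ob C, Hom (tens I X) X)
  (rho : forall X : Ob C, Hom X (tens X I))
  (alpha : forall X Y Z : Ob C, Hom (tens (tens X Y) Z) (tens X (tens Y Z)))
  (T : Ob C) (eta : Hom I T) (mu : Hom (tens T T) T)
  (E M : forall X Y : Ob C, Hom X Y -> Prop).

Local Notation "f (x) g" := (tensm _ _ _ _ f g) (at level 40, left associativity).
Local Notation SOb := (sliceOb C M T).

(* η = j ∘ q with q ∈ E (j ∈ M is built into the slice object Jo = (J, j));
   μ ∘ (s ⊗ s') = (s ⊡ s') ∘ q_{S,S'} with q_{S,S'} ∈ E
   (s ⊡ s' ∈ M is built into the slice object boxS S S'). *)
Definition slice_factorizations (Jo : SOb) (q : Hom I (sob Jo))
  (boxS : SOb -> SOb -> SOb)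
  (boxq : forall S S' : SOb, Hom (tens (sob S) (sob S')) (sob (boxS S S'))) : Prop :=
  E _ _ q /\ comp (sarr Jo) q = eta /\
  (forall S S' : SOb, E _ _ (boxq S S') /\
      comp (sarr (boxS S S')) (boxq S S') = comp mu (sarr S (x) sarr S')).

(* The characterizing equations of f ⊡ f', ℓ, r and a from the paper
   (the "lies over T" equations are built into the type sHom). *)
Definition slice_structure_spec (Jo : SOb) (q : Hom I (sob Jo))
  (boxS : SOb -> SOb -> SOb)
  (boxq : forall S S' : SOb, Hom (tens (sob S) (sob S')) (sob (boxS S S')))
  (boxH : forall A A' B B' : SOb, sHom A A' -> sHom B B' -> sHom (boxS A B) (boxS A' B'))
  (ell : forall S : SOb, sHom (boxS Jo S) S)
  (r : forall S : SOb, sHom S (boxS S Jo))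
  (a : forall S S' S'' : SOb, sHom (boxS (boxS S S') S'') (boxS S (boxS S' S''))) : Prop :=
  (forall (A A' B B' : SOb) (f : sHom A A') (g : sHom B B'),
      comp (proj1_sig (boxH A A' B B' f g)) (boxq A B)
      = comp (boxq A' B') (proj1_sig f (x) proj1_sig g)) /\
  (forall S : SOb,
      comp (proj1_sig (ell S)) (comp (boxq Jo S) (q (x) idm (sob S))) = lam (sob S)) /\
  (forall S : SOb,
      proj1_sig (r S) = comp (boxq S Jo) (comp (idm (sob S) (x) q) (rho (sob S)))) /\
  (forall S S' S'' : SOb,
      comp (proj1_sig (a S S' S''))
           (comp (boxq (boxS S S') S'') (boxq S S' (x) idm (sob S'')))
      = comp (boxq S (boxS S' S''))
             (comp (idm (sob S) (x) boxq S' S'') (alpha (sob S) (sob S') (sob S'')))).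

End SliceStructure.

(* Each structure map of M/T is the diagonal filler of a square whose top is an
   E-map built from the q's (E is closed under (-) ⊗ S) and whose right side is
   the M-map to T; the square commutes by the monoid laws of T and naturality in C.
   Two maps of M/T agreeing after an E-map are equal, because their codomain
   arrows to T are in M, so every axiom of M/T is checked after precomposing with
   such a q-cover, where it becomes the same axiom of C.
   A map of M/T whose underlying map is in E is also in M (M cancels on the left,
   and its composite with the M-map to T is in M), hence invertible.  Since
   ℓ ∘ q_{J,S} ∘ (q ⊗ S) = λ and E cancels on the right, ℓ is in E when λ is
   invertible.  If moreover ρ and α are invertible and E is closed under
   S ⊗ (-), then r and a ∘ q_{S⊡S',S''} ∘ (q_{S,S'} ⊗ S'') are composites of
   E-maps, so r and a are in E as well. *)

From Stdlib Require Import IndefiniteDescription.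

Local Notation "g 'o' f" := (comp g f) (at level 45, right associativity).
Local Notation "[ f ]" := (proj1_sig f).

#[local] Arguments comp_assoc {c X Y Z W} f g h.
#[local] Arguments comp_idl {c X Y} f.
#[local] Arguments comp_idr {c X Y} f.

Section FactorizationSystem.
Context {C : Cat} {E M : forall X Y : Ob C, Hom X Y -> Prop}.
Hypothesis Hofs : is_ofs C E M.

Lemma ofs_E_iso {X Y} (f : Hom X Y) : is_iso f -> E X Y f.
Proof. apply Hofs. Qed.

Lemma ofs_M_iso {X Y} (f : Hom X Y) : is_iso f -> M X Y f.
Proof. apply Hofs. Qed.

Lemma ofs_E_comp {X Y Z} (f : Hom X Y) (g : Hom Y Z) :
  E _ _ f -> E _ _ g -> E _ _ (g o f).
Proof. apply Hofs. Qed.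

Lemma ofs_M_comp {X Y Z} (f : Hom X Y) (g : Hom Y Z) :
  M _ _ f -> M _ _ g -> M _ _ (g o f).
Proof. apply Hofs. Qed.

Lemma ofs_lift {A B X Y} (e : Hom A B) (m : Hom X Y) (f : Hom A X) (g : Hom B Y) :
  E A B e -> M X Y m -> g o e = m o f ->
  exists! d : Hom B X, d o e = f /\ m o d = g.
Proof. apply Hofs. Qed.

Lemma ofs_factor {X Y} (f : Hom X Y) :
  exists (Z : Ob C) (e : Hom X Z) (m : Hom Z Y), E X Z e /\ M Z Y m /\ m o e = f.
Proof. apply Hofs. Qed.

Lemma ofs_lift_unique {A B X Y} (e : Hom A B) (m : Hom X Y) (d1 d2 : Hom B X) :
  E A B e -> M X Y m -> d1 o e = d2 o e -> m o d1 = m o d2 -> d1 = d2.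
Proof.
  intros He Hm H1 H2.
  assert (Hsq : (m o d2) o e = m o (d2 o e)) by (rewrite comp_assoc; reflexivity).
  destruct (ofs_lift e m (d2 o e) (m o d2) He Hm Hsq) as [d [_ Hu]].
  rewrite <- (Hu d1), <- (Hu d2); auto.
Qed.

Lemma ofs_diagonal {A B X Y} (e : Hom A B) (m : Hom X Y) (f : Hom A X) (g : Hom B Y) :
  E A B e -> M X Y m -> g o e = m o f -> { d : Hom B X | d o e = f /\ m o d = g }.
Proof.
  intros He Hm H. apply constructive_indefinite_description.
  destruct (ofs_lift e m f g He Hm H) as [d [Hd _]]. eauto.
Qed.

Lemma ofs_iso_of_EM {X Y} (f : Hom X Y) : E _ _ f -> M _ _ f -> is_iso f.
Proof.
  intros He Hm.
  assert (Hsq : idm Y o f = f o idm X) by (rewrite comp_idl, comp_idr; reflexivity).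
  destruct (ofs_lift f f (idm X) (idm Y) He Hm Hsq) as [d [[H1 H2] _]].
  exists d; auto.
Qed.

(* Factor g = m o e; the lift d of the square (g o f, m) is a right inverse of m,
   and uniqueness of lifts (against f, then against e) makes it a left inverse. *)
Lemma ofs_E_cancel {X Y Z} (f : Hom X Y) (g : Hom Y Z) :
  E _ _ f -> E _ _ (g o f) -> E _ _ g.
Proof.
  intros Hf Hgf. destruct (ofs_factor g) as [W [e [m [He [Hm Hme]]]]].
  assert (Hsq : idm Z o (g o f) = m o (e o f))
    by (rewrite comp_idl, comp_assoc, Hme; reflexivity).
  destruct (ofs_lift _ _ _ _ Hgf Hm Hsq) as [d [[Hd Hmd] _]].
  assert (Hdme : (d o m) o e = e).
  { apply (ofs_lift_unique f m); auto.
    - rewrite <- !comp_assoc, (comp_assoc m), Hme. exact Hd.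
    - rewrite !comp_assoc, Hmd, comp_idl. reflexivity. }
  assert (Hdm : d o m = idm W).
  { apply (ofs_lift_unique e m); auto.
    - rewrite Hdme, comp_idl. reflexivity.
    - rewrite comp_assoc, Hmd, comp_idl, comp_idr. reflexivity. }
  rewrite <- Hme. apply ofs_E_comp; auto. apply ofs_E_iso. exists d. split; auto.
Qed.

Lemma ofs_M_cancel {X Y Z} (f : Hom X Y) (m : Hom Y Z) :
  M _ _ m -> M _ _ (m o f) -> M _ _ f.
Proof.
  intros Hm Hmf. destruct (ofs_factor f) as [W [e [m' [He [Hm' Hme]]]]].
  assert (Hsq : (m o m') o e = (m o f) o idm X)
    by (rewrite comp_idr, <- comp_assoc, Hme; reflexivity).
  destruct (ofs_lift _ _ _ _ He Hmf Hsq) as [d [[Hde Hd] _]].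
  assert (Hed : e o d = idm W).
  { apply (ofs_lift_unique e (m o m')); auto.
    - apply ofs_M_comp; auto.
    - rewrite <- comp_assoc, Hde, comp_idl, comp_idr. reflexivity.
    - rewrite <- comp_assoc, (comp_assoc m'), Hme, comp_assoc, Hd, comp_idr.
      reflexivity. }
  rewrite <- Hme. apply ofs_M_comp; auto. apply ofs_M_iso. exists d. split; auto.
Qed.

Section Slice.
Context {T : Ob C}.

Lemma sarr_M (S : sliceOb C M T) : M _ _ (sarr S).
Proof. exact (proj2_sig (projT2 S)). Qed.

Lemma slice_hom_eq_E {A B : sliceOb C M T} (f g : sHom A B) {X} (e : Hom X (sob A)) :
  E _ _ e -> [f] o e = [g] o e -> f = g.
Proof.
  intros He H. apply sig_eq_proj1. apply (ofs_lift_unique e (sarr B)); auto.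
  - apply sarr_M.
  - rewrite (proj2_sig f), (proj2_sig g). reflexivity.
Qed.

Definition slice_lift {A B : sliceOb C M T} {X} (e : Hom X (sob A)) (f : Hom X (sob B))
    (He : E _ _ e) (Hsq : sarr A o e = sarr B o f) : sHom A B :=
  let d := ofs_diagonal e (sarr B) f (sarr A) He (sarr_M B) Hsq in
  exist _ [d] (proj2 (proj2_sig d)).

Lemma slice_lift_comp {A B : sliceOb C M T} {X} (e : Hom X (sob A)) (f : Hom X (sob B))
    (He : E _ _ e) (Hsq : sarr A o e = sarr B o f) :
  [slice_lift e f He Hsq] o e = f.
Proof. exact (proj1 (proj2_sig (ofs_diagonal _ _ _ _ _ _ _))). Qed.

Lemma slice_iso_of_E {A B : sliceOb C M T} (f : sHom A B) :
  E _ _ [f] -> @is_iso (Slice C M T) A B f.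
Proof.
  intros He.
  assert (Hm : M _ _ [f]).
  { apply (ofs_M_cancel _ (sarr B)); [apply sarr_M|].
    rewrite (proj2_sig f). apply sarr_M. }
  destruct (ofs_iso_of_EM _ He Hm) as [g [Hgf Hfg]].
  assert (Hg : sarr A o g = sarr B).
  { rewrite <- (proj2_sig f), <- comp_assoc, Hfg, comp_idr. reflexivity. }
  exists (exist _ g Hg). split; apply sig_eq_proj1; assumption.
Qed.

End Slice.
End FactorizationSystem.

Section Bifunctor.
Context {C : Cat} {tens : Ob C -> Ob C -> Ob C}
  {tensm : forall A A' B B' : Ob C, Hom A A' -> Hom B B' -> Hom (tens A B) (tens A' B')}.
Local Notation "f (x) g" := (tensm _ _ _ _ f g) (at level 40, left associativity).
Hypothesis tensm_comp : forall (A1 A2 A3 B1 B2 B3 : Ob C) (f1 : Hom A1 A2) (f2 : Hom A2 A3)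
  (g1 : Hom B1 B2) (g2 : Hom B2 B3), (f2 o f1) (x) (g2 o g1) = (f2 (x) g2) o (f1 (x) g1).

Lemma tensm_comp_tail {A1 A2 A3 B1 B2 B3 X : Ob C} (f1 : Hom A1 A2) (f2 : Hom A2 A3)
    (g1 : Hom B1 B2) (g2 : Hom B2 B3) (h : Hom X _) :
  (f2 (x) g2) o ((f1 (x) g1) o h) = ((f2 o f1) (x) (g2 o g1)) o h.
Proof. rewrite tensm_comp, comp_assoc. reflexivity. Qed.

Lemma tensm_comp_l {A A' A'' B B'} (f : Hom A' A'') (g : Hom A A') (h : Hom B B') :
  (f o g) (x) h = (f (x) idm B') o (g (x) h).
Proof. rewrite <- tensm_comp, comp_idl. reflexivity. Qed.

Lemma tensm_comp_r {A A' A'' B B'} (f : Hom A' A'') (g : Hom A A') (h : Hom B B') :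
  h (x) (f o g) = (idm B' (x) f) o (h (x) g).
Proof. rewrite <- tensm_comp, comp_idl. reflexivity. Qed.

Lemma tensm_split_l {A A' B B'} (f : Hom A A') (g : Hom B B') :
  f (x) g = (f (x) idm B') o (idm A (x) g).
Proof. rewrite <- tensm_comp, comp_idl, comp_idr. reflexivity. Qed.

Lemma tensm_split_r {A A' B B'} (f : Hom A A') (g : Hom B B') :
  f (x) g = (idm A' (x) g) o (f (x) idm B).
Proof. rewrite <- tensm_comp, comp_idl, comp_idr. reflexivity. Qed.

Lemma tensm_interchange {A A' B B'} (f : Hom A A') (g : Hom B B') :
  (idm A' (x) g) o (f (x) idm B) = (f (x) idm B') o (idm A (x) g).
Proof. rewrite <- tensm_split_l, <- tensm_split_r. reflexivity. Qed.

Lemma tensm_interchange_tail {A A' B B' X} (f : Hom A A') (g : Hom B B') (h : Hom X _) :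
  (idm A' (x) g) o ((f (x) idm B) o h) = (f (x) idm B') o ((idm A (x) g) o h).
Proof. rewrite !comp_assoc, tensm_interchange. reflexivity. Qed.

End Bifunctor.

Section SliceSkewMonoidal.
Variables (C : Cat) (I : Ob C) (tens : Ob C -> Ob C -> Ob C)
  (tensm : forall A A' B B' : Ob C, Hom A A' -> Hom B B' -> Hom (tens A B) (tens A' B'))
  (lam : forall X : Ob C, Hom (tens I X) X)
  (rho : forall X : Ob C, Hom X (tens X I))
  (alpha : forall X Y Z : Ob C, Hom (tens (tens X Y) Z) (tens X (tens Y Z))).
Hypothesis HC : skew_monoidal C I tens tensm lam rho alpha.
Variables (T : Ob C) (eta : Hom I T) (mu : Hom (tens T T) T).
Hypothesis HT : is_monoid C I tens tensm lam rho alpha T eta mu.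
Variables (E M : forall X Y : Ob C, Hom X Y -> Prop).
Hypothesis Hofs : is_ofs C E M.
Hypothesis HEl : forall (S : sliceOb C M T) (X Y : Ob C) (e : Hom X Y),
  E X Y e -> E _ _ (tensm X Y (sob S) (sob S) e (idm (sob S))).
Variables (Jo : sliceOb C M T) (q : Hom I (sob Jo))
  (boxS : sliceOb C M T -> sliceOb C M T -> sliceOb C M T)
  (boxq : forall S S' : sliceOb C M T, Hom (tens (sob S) (sob S')) (sob (boxS S S'))).
Hypothesis Hfact : slice_factorizations C I tens tensm T eta mu E M Jo q boxS boxq.

Local Notation "f (x) g" := (tensm _ _ _ _ f g) (at level 40, left associativity).
Local Notation SOb := (sliceOb C M T).

Lemma tensm_id (A B : Ob C) : idm A (x) idm B = idm (tens A B).
Proof. apply (tens_id _ _ _ _ _ _ _ HC). Qed.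

Lemma tensm_comp [A1 A2 A3 B1 B2 B3 : Ob C] (f1 : Hom A1 A2) (f2 : Hom A2 A3)
    (g1 : Hom B1 B2) (g2 : Hom B2 B3) :
  (f2 o f1) (x) (g2 o g1) = (f2 (x) g2) o (f1 (x) g1).
Proof. apply (tens_comp _ _ _ _ _ _ _ HC). Qed.

Lemma lam_natural {X Y} (f : Hom X Y) : f o lam X = lam Y o (idm I (x) f).
Proof. apply (lam_nat _ _ _ _ _ _ _ HC). Qed.

Lemma rho_natural {X Y} (f : Hom X Y) : rho Y o f = (f (x) idm I) o rho X.
Proof. apply (rho_nat _ _ _ _ _ _ _ HC). Qed.

Lemma alpha_natural {X X' Y Y' Z Z'} (f : Hom X X') (g : Hom Y Y') (h : Hom Z Z') :
  alpha X' Y' Z' o ((f (x) g) (x) h) = (f (x) (g (x) h)) o alpha X Y Z.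
Proof. apply (alpha_nat _ _ _ _ _ _ _ HC). Qed.

Lemma mu_unit_l : mu o (eta (x) idm T) = lam T.
Proof. apply HT. Qed.

Lemma mu_unit_r : mu o ((idm T (x) eta) o rho T) = idm T.
Proof. apply HT. Qed.

Lemma mu_assoc : mu o (mu (x) idm T) = mu o ((idm T (x) mu) o alpha T T T).
Proof. apply HT. Qed.

Lemma q_E : E _ _ q.
Proof. apply Hfact. Qed.

Lemma q_eta : sarr Jo o q = eta.
Proof. apply Hfact. Qed.

Lemma boxq_E (S S' : SOb) : E _ _ (boxq S S').
Proof. apply Hfact. Qed.

Lemma boxq_mu (S S' : SOb) : sarr (boxS S S') o boxq S S' = mu o (sarr S (x) sarr S').
Proof. apply Hfact. Qed.

Lemma boxq_mu_tail (S S' : SOb) {X} (h : Hom X _) :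
  sarr (boxS S S') o (boxq S S' o h) = (mu o (sarr S (x) sarr S')) o h.
Proof. rewrite comp_assoc, boxq_mu. reflexivity. Qed.

Lemma ell_cover_E (S : SOb) : E _ _ (boxq Jo S o (q (x) idm (sob S))).
Proof. apply (ofs_E_comp Hofs); [apply HEl, q_E | apply boxq_E]. Qed.

Lemma alpha_cover_E (S S' S'' : SOb) :
  E _ _ (boxq (boxS S S') S'' o (boxq S S' (x) idm (sob S''))).
Proof. apply (ofs_E_comp Hofs); [apply HEl, boxq_E | apply boxq_E]. Qed.

Lemma box_lift_square (A A' B B' : SOb) (f : sHom A A') (g : sHom B B') :
  sarr (boxS A B) o boxq A B = sarr (boxS A' B') o (boxq A' B' o ([f] (x) [g])).
Proof.
  rewrite boxq_mu, boxq_mu_tail, <- comp_assoc, <- tensm_comp, (proj2_sig f), (proj2_sig g).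
  reflexivity.
Qed.

Definition box_lift (A A' B B' : SOb) (f : sHom A A') (g : sHom B B') :
  sHom (boxS A B) (boxS A' B') :=
  slice_lift Hofs _ _ (boxq_E A B) (box_lift_square A A' B B' f g).

Lemma ell_lift_square (S : SOb) :
  sarr (boxS Jo S) o (boxq Jo S o (q (x) idm (sob S))) = sarr S o lam (sob S).
Proof.
  rewrite boxq_mu_tail, <- comp_assoc, <- tensm_comp, q_eta, comp_idr, lam_natural.
  rewrite (tensm_split_l tensm_comp eta), comp_assoc, mu_unit_l. reflexivity.
Qed.

Definition ell_lift (S : SOb) : sHom (boxS Jo S) S :=
  slice_lift Hofs _ _ (ell_cover_E S) (ell_lift_square S).

Lemma r_hom_over_T (S : SOb) :
  sarr (boxS S Jo) o (boxq S Jo o ((idm (sob S) (x) q) o rho (sob S))) = sarr S.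
Proof.
  rewrite boxq_mu_tail, comp_assoc, <- (comp_assoc mu), <- tensm_comp, q_eta, comp_idr.
  rewrite (tensm_split_r tensm_comp (sarr S) eta), <- !comp_assoc, <- rho_natural.
  rewrite (comp_assoc (idm T (x) eta)), comp_assoc, mu_unit_r, comp_idl.
  reflexivity.
Qed.

Definition r_hom (S : SOb) : sHom S (boxS S Jo) := exist _ _ (r_hom_over_T S).

Lemma alpha_lift_square (S S' S'' : SOb) :
  sarr (boxS (boxS S S') S'') o (boxq (boxS S S') S'' o (boxq S S' (x) idm (sob S'')))
  = sarr (boxS S (boxS S' S''))
    o (boxq S (boxS S' S'') o ((idm (sob S) (x) boxq S' S'') o alpha _ _ _)).
Proof.
  rewrite !boxq_mu_tail, <- (comp_assoc mu (_ (x) _)), <- tensm_comp, comp_idr, boxq_mu.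
  rewrite comp_assoc, <- (comp_assoc mu (_ (x) _)), <- tensm_comp, comp_idr, boxq_mu.
  rewrite (tensm_comp_l tensm_comp), (tensm_comp_r tensm_comp), comp_assoc, mu_assoc.
  rewrite <- !comp_assoc, alpha_natural. reflexivity.
Qed.

Definition alpha_lift (S S' S'' : SOb) : sHom (boxS (boxS S S') S'') (boxS S (boxS S' S'')) :=
  slice_lift Hofs _ _ (alpha_cover_E S S' S'') (alpha_lift_square S S' S'').

Lemma slice_structure_spec_lift :
  slice_structure_spec C I tens tensm lam rho alpha T M Jo q boxS boxq
    box_lift ell_lift r_hom alpha_lift.
Proof.
  split; [|split; [|split]]; intros; try apply slice_lift_comp.
  reflexivity.
Qed.

Section Structure.
Variables
  (boxH : forall A A' B B' : SOb, sHom A A' -> sHom B B' -> sHom (boxS A B) (boxS A' B'))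
  (ell : forall S : SOb, sHom (boxS Jo S) S)
  (r : forall S : SOb, sHom S (boxS S Jo))
  (a : forall S S' S'' : SOb, sHom (boxS (boxS S S') S'') (boxS S (boxS S' S''))).
Hypothesis Hspec :
  slice_structure_spec C I tens tensm lam rho alpha T M Jo q boxS boxq boxH ell r a.

Local Notation "g 'os' f" := (@comp (Slice C M T) _ _ _ g f) (at level 45, right associativity).
Local Notation "f [x] g" := (boxH _ _ _ _ f g) (at level 40, left associativity).
Local Notation sidm := (@idm (Slice C M T)).

Lemma boxH_q (A A' B B' : SOb) (f : sHom A A') (g : sHom B B') :
  [boxH A A' B B' f g] o boxq A B = boxq A' B' o ([f] (x) [g]).
Proof. apply Hspec. Qed.

Lemma boxH_q_tail (A A' B B' : SOb) (f : sHom A A') (g : sHom B B') {X} (h : Hom X _) :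
  [boxH A A' B B' f g] o (boxq A B o h) = boxq A' B' o (([f] (x) [g]) o h).
Proof. rewrite !comp_assoc, boxH_q. reflexivity. Qed.

Lemma ell_q (S : SOb) : [ell S] o (boxq Jo S o (q (x) idm (sob S))) = lam (sob S).
Proof. apply Hspec. Qed.

Lemma ell_q_tail (S : SOb) {X} (h : Hom X _) :
  [ell S] o (boxq Jo S o ((q (x) idm (sob S)) o h)) = lam (sob S) o h.
Proof. rewrite !comp_assoc, <- (comp_assoc _ (boxq _ _)), ell_q. reflexivity. Qed.

Lemma r_q (S : SOb) : [r S] = boxq S Jo o ((idm (sob S) (x) q) o rho (sob S)).
Proof. apply Hspec. Qed.

Lemma a_q (S S' S'' : SOb) :
  [a S S' S''] o (boxq (boxS S S') S'' o (boxq S S' (x) idm (sob S'')))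
  = boxq S (boxS S' S'') o ((idm (sob S) (x) boxq S' S'') o alpha (sob S) (sob S') (sob S'')).
Proof. apply Hspec. Qed.

Lemma a_q_tail (S S' S'' : SOb) {X} (h : Hom X _) :
  [a S S' S''] o (boxq (boxS S S') S'' o ((boxq S S' (x) idm (sob S'')) o h))
  = boxq S (boxS S' S'')
    o ((idm (sob S) (x) boxq S' S'') o (alpha (sob S) (sob S') (sob S'') o h)).
Proof.
  rewrite (comp_assoc (boxq (boxS S S') S'')), comp_assoc, a_q, <- !comp_assoc.
  reflexivity.
Qed.

Lemma slice_tens_id (A B : SOb) : sidm A [x] sidm B = sidm (boxS A B).
Proof.
  apply (slice_hom_eq_E Hofs _ _ _ (boxq_E A B)); simpl.
  rewrite boxH_q, tensm_id, comp_idr, comp_idl. reflexivity.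
Qed.

Lemma slice_tens_comp (A1 A2 A3 B1 B2 B3 : SOb) (f1 : sHom A1 A2) (f2 : sHom A2 A3)
    (g1 : sHom B1 B2) (g2 : sHom B2 B3) :
  (f2 os f1) [x] (g2 os g1) = (f2 [x] g2) os (f1 [x] g1).
Proof.
  apply (slice_hom_eq_E Hofs _ _ _ (boxq_E A1 B1)); simpl.
  rewrite boxH_q, <- comp_assoc, boxH_q, boxH_q_tail, <- tensm_comp. reflexivity.
Qed.

Lemma slice_lam_nat (X Y : SOb) (f : sHom X Y) : f os ell X = ell Y os (sidm Jo [x] f).
Proof.
  apply (slice_hom_eq_E Hofs _ _ _ (ell_cover_E X)); simpl.
  rewrite <- !comp_assoc, ell_q, lam_natural, boxH_q_tail; simpl.
  rewrite (tensm_interchange tensm_comp), ell_q_tail. reflexivity.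
Qed.

Lemma slice_rho_nat (X Y : SOb) (f : sHom X Y) : r Y os f = (f [x] sidm Jo) os r X.
Proof.
  apply sig_eq_proj1; simpl.
  rewrite !r_q, <- !comp_assoc, rho_natural, (tensm_interchange_tail tensm_comp), boxH_q_tail.
  reflexivity.
Qed.

Lemma slice_alpha_nat (X X' Y Y' Z Z' : SOb) (f : sHom X X') (g : sHom Y Y') (h : sHom Z Z') :
  a X' Y' Z' os ((f [x] g) [x] h) = (f [x] (g [x] h)) os a X Y Z.
Proof.
  apply (slice_hom_eq_E Hofs _ _ _ (alpha_cover_E X Y Z)); simpl.
  rewrite <- !comp_assoc, boxH_q_tail, <- tensm_comp, boxH_q, comp_idr.
  rewrite (tensm_comp_l tensm_comp), a_q_tail, alpha_natural, a_q, boxH_q_tail.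
  rewrite !(tensm_comp_tail tensm_comp), comp_idl, comp_idr, boxH_q. reflexivity.
Qed.

Lemma slice_skew_ax1 : ell Jo os r Jo = sidm Jo.
Proof.
  apply (slice_hom_eq_E Hofs _ _ _ q_E); simpl.
  rewrite <- !comp_assoc, r_q, <- !comp_assoc, rho_natural, (tensm_interchange_tail tensm_comp).
  rewrite ell_q_tail, comp_assoc, <- lam_natural, <- comp_assoc, (skew_ax1 _ _ _ _ _ _ _ HC).
  rewrite comp_idr, comp_idl. reflexivity.
Qed.

Lemma slice_skew_ax2 (X Y : SOb) :
  (sidm X [x] ell Y) os (a X Jo Y os (r X [x] sidm Y)) = sidm (boxS X Y).
Proof.
  apply (slice_hom_eq_E Hofs _ _ _ (boxq_E X Y)); simpl.
  rewrite <- !comp_assoc, boxH_q; simpl.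
  rewrite r_q, !(tensm_comp_l tensm_comp), a_q_tail, (comp_assoc (alpha _ _ _)).
  rewrite alpha_natural, <- comp_assoc, boxH_q_tail; simpl.
  rewrite !(tensm_comp_tail tensm_comp), !comp_idl, <- (comp_assoc [ell Y]), ell_q.
  rewrite (skew_ax2 _ _ _ _ _ _ _ HC), comp_idr. reflexivity.
Qed.

Lemma slice_skew_ax3 (X Y : SOb) : ell (boxS X Y) os a Jo X Y = ell X [x] sidm Y.
Proof.
  assert (Hcover : E _ _ (boxq (boxS Jo X) Y
    o ((boxq Jo X (x) idm (sob Y)) o ((q (x) idm (sob X)) (x) idm (sob Y))))).
  { apply (ofs_E_comp Hofs); [apply (ofs_E_comp Hofs) | apply boxq_E];
      apply HEl; [apply HEl, q_E | apply boxq_E]. }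
  apply (slice_hom_eq_E Hofs _ _ _ Hcover); simpl.
  rewrite <- !comp_assoc, a_q_tail, alpha_natural, tensm_id.
  rewrite (tensm_interchange_tail tensm_comp), ell_q_tail, comp_assoc, <- lam_natural.
  rewrite <- comp_assoc, (skew_ax3 _ _ _ _ _ _ _ HC), boxH_q_tail; simpl.
  rewrite (tensm_comp_tail tensm_comp), <- tensm_comp, !comp_idl, <- (comp_assoc [ell X]), ell_q.
  reflexivity.
Qed.

Lemma slice_skew_ax4 (X Y : SOb) : a X Y Jo os r (boxS X Y) = sidm X [x] r Y.
Proof.
  apply (slice_hom_eq_E Hofs _ _ _ (boxq_E X Y)); simpl.
  rewrite <- !comp_assoc, r_q, <- !comp_assoc, rho_natural, (tensm_interchange_tail tensm_comp).
  rewrite a_q_tail, <- (tensm_id (sob X) (sob Y)), (comp_assoc (alpha _ _ _)), alpha_natural.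
  rewrite <- comp_assoc, (skew_ax4 _ _ _ _ _ _ _ HC), boxH_q; simpl.
  rewrite r_q, (tensm_comp_r tensm_comp), (tensm_comp_r tensm_comp). reflexivity.
Qed.

Lemma slice_skew_ax5 (X Y Z W : SOb) :
  (sidm X [x] a Y Z W) os (a X (boxS Y Z) W os (a X Y Z [x] sidm W))
  = a X Y (boxS Z W) os a (boxS X Y) Z W.
Proof.
  assert (Hcover : E _ _ (boxq (boxS (boxS X Y) Z) W
    o ((boxq (boxS X Y) Z (x) idm (sob W)) o ((boxq X Y (x) idm (sob Z)) (x) idm (sob W))))).
  { apply (ofs_E_comp Hofs); [apply (ofs_E_comp Hofs) | apply boxq_E];
      apply HEl; [apply HEl, boxq_E | apply boxq_E]. }
  apply (slice_hom_eq_E Hofs _ _ _ Hcover); simpl.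
  rewrite <- !comp_assoc, boxH_q_tail; simpl.
  rewrite (tensm_comp_tail tensm_comp), <- tensm_comp, !comp_idl, <- (comp_assoc [a X Y Z]), a_q.
  rewrite !(tensm_comp_l tensm_comp), a_q_tail, (comp_assoc (alpha _ _ _)), alpha_natural.
  rewrite <- comp_assoc, boxH_q_tail; simpl.
  rewrite !(tensm_comp_tail tensm_comp), !comp_idl, <- (comp_assoc [a Y Z W]), a_q.
  rewrite !(tensm_comp_r tensm_comp), <- !comp_assoc, (skew_ax5 _ _ _ _ _ _ _ HC).
  rewrite a_q_tail, alpha_natural, tensm_id, (tensm_interchange_tail tensm_comp), a_q_tail.
  rewrite <- (tensm_id (sob X) (sob Y)), (comp_assoc (alpha _ _ _)), alpha_natural, <- !comp_assoc.
  reflexivity.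
Qed.

Lemma slice_skew_monoidal : skew_monoidal (Slice C M T) Jo boxS boxH ell r a.
Proof.
  exact (Build_skew_monoidal (Slice C M T) Jo boxS boxH ell r a slice_tens_id slice_tens_comp slice_lam_nat
    slice_rho_nat slice_alpha_nat slice_skew_ax1 slice_skew_ax2 slice_skew_ax3
    slice_skew_ax4 slice_skew_ax5).
Qed.

Lemma slice_ell_iso : (forall X : Ob C, is_iso (lam X)) ->
  forall S : SOb, @is_iso (Slice C M T) _ _ (ell S).
Proof.
  intros Hlam S. apply (slice_iso_of_E Hofs).
  apply (ofs_E_cancel Hofs _ _ (ell_cover_E S)).
  rewrite ell_q. apply (ofs_E_iso Hofs), Hlam.
Qed.

Hypothesis HEr : forall (S : SOb) (X Y : Ob C) (e : Hom X Y),
  E X Y e -> E _ _ (tensm (sob S) (sob S) X Y (idm (sob S)) e).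

Lemma slice_r_iso : (forall X : Ob C, is_iso (rho X)) ->
  forall S : SOb, @is_iso (Slice C M T) _ _ (r S).
Proof.
  intros Hrho S. apply (slice_iso_of_E Hofs). rewrite r_q.
  apply (ofs_E_comp Hofs); [apply (ofs_E_comp Hofs) | apply boxq_E].
  - apply (ofs_E_iso Hofs), Hrho.
  - apply HEr, q_E.
Qed.

Lemma slice_a_iso : (forall X Y Z : Ob C, is_iso (alpha X Y Z)) ->
  forall S S' S'' : SOb, @is_iso (Slice C M T) _ _ (a S S' S'').
Proof.
  intros Halpha S S' S''. apply (slice_iso_of_E Hofs).
  apply (ofs_E_cancel Hofs _ _ (alpha_cover_E S S' S'')). rewrite a_q.
  apply (ofs_E_comp Hofs); [apply (ofs_E_comp Hofs) | apply boxq_E].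
  - apply (ofs_E_iso Hofs), Halpha.
  - apply HEr, boxq_E.
Qed.

Lemma slice_monoidal : monoidal C I tens tensm lam rho alpha ->
  monoidal (Slice C M T) Jo boxS boxH ell r a.
Proof.
  intros [_ [Hlam [Hrho Halpha]]].
  split; [exact slice_skew_monoidal | split; [| split]].
  - exact (slice_ell_iso Hlam).
  - exact (slice_r_iso Hrho).
  - exact (slice_a_iso Halpha).
Qed.

End Structure.
End SliceSkewMonoidal.

Theorem theorem3p9 (C : Cat) (I : Ob C) (tens : Ob C -> Ob C -> Ob C)
  (tensm : forall A A' B B' : Ob C, Hom A A' -> Hom B B' -> Hom (tens A B) (tens A' B'))
  (lam : forall X : Ob C, Hom (tens I X) X)
  (rho : forall X : Ob C, Hom X (tens X I))
  (alpha : forall X Y Z : Ob C, Hom (tens (tens X Y) Z) (tens X (tens Y Z)))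
  (HC : skew_monoidal C I tens tensm lam rho alpha)
  (T : Ob C) (eta : Hom I T) (mu : Hom (tens T T) T)
  (HT : is_monoid C I tens tensm lam rho alpha T eta mu)
  (E M : forall X Y : Ob C, Hom X Y -> Prop)
  (Hofs : is_ofs C E M)
  (HEl : forall (S : sliceOb C M T) (X Y : Ob C) (e : Hom X Y),
      E X Y e -> E _ _ (tensm X Y (sob S) (sob S) e (idm (sob S))))
  (Jo : sliceOb C M T) (q : Hom I (sob Jo))
  (boxS : sliceOb C M T -> sliceOb C M T -> sliceOb C M T)
  (boxq : forall S S' : sliceOb C M T, Hom (tens (sob S) (sob S')) (sob (boxS S S')))
  (Hfact : slice_factorizations C I tens tensm T eta mu E M Jo q boxS boxq) :
  (exists (boxH : forall A A' B B' : sliceOb C M T,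
                    sHom A A' -> sHom B B' -> sHom (boxS A B) (boxS A' B'))
          (ell : forall S : sliceOb C M T, sHom (boxS Jo S) S)
          (r : forall S : sliceOb C M T, sHom S (boxS S Jo))
          (a : forall S S' S'' : sliceOb C M T,
                 sHom (boxS (boxS S S') S'') (boxS S (boxS S' S''))),
      slice_structure_spec C I tens tensm lam rho alpha T M Jo q boxS boxq boxH ell r a)
  /\
  (forall (boxH : forall A A' B B' : sliceOb C M T,
                    sHom A A' -> sHom B B' -> sHom (boxS A B) (boxS A' B'))
          (ell : forall S : sliceOb C M T, sHom (boxS Jo S) S)
          (r : forall S : sliceOb C M T, sHom S (boxS S Jo))
          (a : forall S S' S'' : sliceOb C M T,
                 sHom (boxS (boxS S S') S'') (boxS S (boxS S' S''))),
      slice_structure_spec C I tens tensm lam rho alpha T M Jo q boxS boxq boxH ell r a ->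
      skew_monoidal (Slice C M T) Jo boxS boxH ell r a
      /\ ((forall X : Ob C, is_iso (lam X)) ->
          forall S : sliceOb C M T, @is_iso (Slice C M T) _ _ (ell S))
      /\ ((forall (S : sliceOb C M T) (X Y : Ob C) (e : Hom X Y),
              E X Y e -> E _ _ (tensm (sob S) (sob S) X Y (idm (sob S)) e)) ->
          monoidal C I tens tensm lam rho alpha ->
          monoidal (Slice C M T) Jo boxS boxH ell r a)).
Proof.
  split.
  - eexists _, _, _, _.
    exact (slice_structure_spec_lift C I tens tensm lam rho alpha HC T eta mu HT E M Hofs HEl
      Jo q boxS boxq Hfact).
  - intros boxH ell r a Hspec. split; [| split].
    + eapply slice_skew_monoidal; eassumption.
    + eapply slice_ell_iso; eassumption.
    + intros HEr HCmon. eapply slice_monoidal; eassumption.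
Qed.
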